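(* Let $A$ be a set with $n$ elements. The $\square$-map $p_A:Y^A\to\tilde Z_n$, $p_A(c,<)=z^k_{|c^{-1}(1)|}$ for $(c,<)\in Y^A[k]$, is $\Sigma_A$-invariant, and the induced $\square$-map $Y^A/\Sigma_A\to\tilde Z_n$ from the orbit $\square$-set (with $(Y^A/\Sigma_A)[k]=Y^A[k]/\Sigma_A$) is an isomorphism of $\square$-sets.
   Context: A precubical set ($\square$-set) $K$ is a sequence of pairwise disjoint sets $(K[n])_{n\ge0}$ with face maps $d^\varepsilon_i:K[n]\to K[n-1]$ ($1\le i\le n$, $\varepsilon\in\{0,1\}$) satisfying $d^\varepsilon_i d^\eta_j=d^\eta_{j-1}d^\varepsilon_i$ for $i<j$; $\square$-maps are families of maps $K[n]\to L[n]$ commuting with face maps. $\tilde Z_n$ is the $\square$-set with $\tilde Z_n[k]=\{z^k_j:0\le j\le n-k\}$ ($\emptyset$ for $k>n$) and $d^\varepsilon_i(z^k_j)=z^{k-1}_{j+\varepsilon}$. $Y^A$ is the $\square$-set where $Y^A[k]$ is the set of pairs $(c,<)$ with $c:A\to\{0,*,1\}$, $|c^{-1}( * )|=k$, and $<$ a strict total order on $c^{-1}( * )$; if $c^{-1}( * )=\{a_1<\dots<a_k\}$ then $d^\varepsilon_i(c,<)=(c',<')$ where $c'(a_i)=\varepsilon$, $c'=c$ elsewhere, and $<'$ is the restriction of $<$ to $c^{-1}( * )\setminus\{a_i\}$. $\Sigma_A$ acts on $Y^A$ from the right by $(c,<)\sigma=(c\circ\sigma,<\sigma)$, where $a\,(<\sigma)\,b$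 iff $\sigma(a)<\sigma(b)$. *)

From mathcomp Require Import all_boot all_fingroup.
Set Implicit Arguments. Unset Strict Implicit. Unset Printing Implicit Defensive.

(* Coordinates c : A -> {0,*,1} are encoded as option bool:
   Some false = 0, None = *, Some true = 1.
   A strict total order < on c^{-1}( * ) is encoded as a relation r on A
   (r a b  means  a < b) relating only elements of c^{-1}( * ). *)
Definition coord (A : finType) := {ffun A -> option bool}.
Definition rawY (A : finType) := (coord A * {ffun A -> {ffun A -> bool}})%type.

Section Y.
Variable A : finType.

Definition starset (x : rawY A) : {set A} := [set a | x.1 a == None].
Definition oneset (x : rawY A) : {set A} := [set a | x.1 a == Some true].

Definition wfY (x : rawY A) : bool :=
  [&& [forall a, forall b, x.2 a b ==> (a \in starset x) && (b \in starset x)],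
      [forall a, ~~ x.2 a a],
      [forall a, forall b, forall d, x.2 a b && x.2 b d ==> x.2 a d] &
      [forall a, forall b, (a \in starset x) && (b \in starset x) && (a != b)
                            ==> x.2 a b || x.2 b a]].

Definition Ylev (k : nat) : {set rawY A} :=
  [set x | wfY x & #|starset x| == k].

(* the (i+1)-th element a_{i+1} of c^{-1}( * ) w.r.t. < (i is 0-indexed) *)
Definition ith (i : nat) (x : rawY A) : option A :=
  [pick a | (a \in starset x) && (#|[set b | x.2 b a]| == i)].

(* face map d^e_{i+1} (0-indexed i) *)
Definition faceY (i : nat) (e : bool) (x : rawY A) : rawY A :=
  match ith i x with
  | Some a => ([ffun b => if b == a then Some e else x.1 b],
               [ffun b => [ffun b' => [&& x.2 b b', b != a & b' != a]]])
  | None => x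
  end.

Definition actY (x : rawY A) (s : {perm A}) : rawY A :=
  ([ffun a => x.1 (s a)], [ffun a => [ffun b => x.2 (s a) (s b)]]).

Definition orbitY (x : rawY A) : {set rawY A} := [set actY x s | s : {perm A}].

Definition orbits (k : nat) : {set {set rawY A}} := [set orbitY x | x in Ylev k].

Definition qfaceY (i : nat) (e : bool) (O : {set rawY A}) : {set rawY A} :=
  match [pick x in O] with Some x => orbitY (faceY i e x) | None => set0 end.

End Y.

(* Z~_n : z^k_j is encoded as the pair (k, j); Z~_n[k] = {(k,j) | j <= n - k} *)
Definition Zt (n k : nat) (z : nat * nat) : bool := (z.1 == k) && (k + z.2 <= n).
Definition zface (e : bool) (z : nat * nat) : nat * nat := (z.1.-1, z.2 + e).

Definition pA (A : finType) (x : rawY A) : nat * nat := (#|starset x|, #|oneset x|).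

Definition qpA (A : finType) (O : {set rawY A}) : nat * nat :=
  match [pick x in O] with Some x => pA x | None => (0, 0) end.

From mathcomp Require Import all_boot all_fingroup zify.
Set Implicit Arguments. Unset Strict Implicit. Unset Printing Implicit Defensive.

(* Listing [A] with the starred coordinates of a well-formed [(c,<)] first,
   in the order [<], then the coordinates equal to 1, then those equal to 0,
   gives a permutation [s] of [A] with [(c,<) = stdY k j . s], where
   [k = |c^-1( * )|], [j = |c^-1(1)|] and [stdY k j] is the standard element
   whose starred and 1-coordinates are the first [k] and the next [j] elements
   of [enum A].  Hence the orbit of [(c,<)] is determined by [p_A (c,<)], and
   the [stdY k j] realise every [z^k_j].  A face [d^e_i] sets one starred
   coordinate to [e], so it lowers [k] by one and raises [j] by [e]. *)

Section RankIn.
Variables (T : finType) (lt : rel T) (B : {set T}).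
Hypothesis lt_irr : irreflexive lt.
Hypothesis lt_trans : transitive lt.
Hypothesis lt_total : {in B &, forall a b, a != b -> lt a b || lt b a}.

Definition rank_in (a : T) : nat := #|[set b in B | lt b a]|.

Lemma rank_in_lt a : a \in B -> rank_in a < #|B|.
Proof.
move=> aB; apply/proper_card/properP; split.
  by apply/subsetP => b; rewrite inE => /andP[].
by exists a; rewrite // inE lt_irr andbF.
Qed.

Lemma rank_in_mono a b : a \in B -> lt a b -> rank_in a < rank_in b.
Proof.
move=> aB ab; apply/proper_card/properP; split.
  by apply/subsetP => d; rewrite !inE => /andP[-> da]; apply: lt_trans ab.
by exists a; rewrite !inE ?aB ?ab ?lt_irr ?andbF.
Qed.

Lemma rank_in_inj : {in B &, injective rank_in}.
Proof.
move=> a b aB bB eq_ab; apply/eqP; apply: contraT => ne.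
by case/orP: (lt_total aB bB ne) => [/(rank_in_mono aB) | /(rank_in_mono bB)];
  rewrite eq_ab ltnn.
Qed.

Lemma rank_in_onto i : i < #|B| -> exists2 a, a \in B & rank_in a = i.
Proof.
move=> lt_iB; set r := map rank_in (enum B).
have uniq_r : uniq r.
  by rewrite map_inj_in_uniq ?enum_uniq // => a b; rewrite !mem_enum; apply: rank_in_inj.
have sub_r : {subset r <= iota 0 #|B|}.
  by move=> _ /mapP[a aB ->]; rewrite mem_iota rank_in_lt // -mem_enum.
have size_r : size (iota 0 #|B|) <= size r by rewrite size_iota size_map cardE.
have [_ /(_ i)] := uniq_min_size uniq_r sub_r size_r.
rewrite mem_iota lt_iB => /mapP[a aB ->].
by exists a; rewrite // -mem_enum.
Qed.

End RankIn.

Section YA.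
Variable A : finType.
Implicit Types (x : rawY A) (s t : {perm A}).

Definition ordY x : rel A := fun a b => x.2 a b.
Definition zeroset x : {set A} := [set a | x.1 a == Some false].

Lemma wfYP x : reflect
  [/\ forall a b, ordY x a b -> (a \in starset x) && (b \in starset x),
      irreflexive (ordY x), transitive (ordY x) &
      {in starset x &, forall a b, a != b -> ordY x a b || ordY x b a}]
  (wfY x).
Proof.
apply: (iffP and4P) => [[/forallP h1 /forallP h2 /forallP h3 /forallP h4] | [h1 h2 h3 h4]].
  split.
  - by move=> a b; move/forallP/(_ b)/implyP: (h1 a).
  - by move=> a; apply/negbTE/h2.
  - move=> b a d ab bd; move/forallP/(_ b)/forallP/(_ d)/implyP: (h3 a).
    by apply; apply/andP.
  - move=> a b aS bS ne; move/forallP/(_ b)/implyP: (h4 a).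
    by apply; rewrite aS bS.
split; apply/forallP => a.
- by apply/forallP => b; apply/implyP; apply: h1.
- by have := h2 a; rewrite /ordY => ->.
- by do 2![apply/forallP => ?]; apply/implyP => /andP[]; apply: h3.
- by apply/forallP => b; apply/implyP => /andP[/andP[]]; apply: h4.
Qed.

Lemma card_starset_oneset_zeroset x :
  #|starset x| + #|oneset x| + #|zeroset x| = #|A|.
Proof.
rewrite -addnA -(cardsC (starset x)); congr (_ + _).
rewrite -(cardsID (oneset x) (~: starset x)); congr (_ + _); apply: eq_card => a;
  by rewrite !inE; case: (x.1 a) => [[]|].
Qed.

Definition rk (a : A) : nat := enum_rank a.
Definition rk_lt : rel A := fun a b => rk a < rk b.

Lemma rk_inj : injective rk.
Proof. by move=> a b /val_inj/enum_rank_inj. Qed.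

Lemma rk_lt_irr : irreflexive rk_lt. Proof. by move=> a; apply: ltnn. Qed.
Lemma rk_lt_trans : transitive rk_lt. Proof. by move=> b a d; apply: ltn_trans. Qed.
Lemma rk_lt_total (B : {set A}) :
  {in B &, forall a b, a != b -> rk_lt a b || rk_lt b a}.
Proof. by move=> a b _ _ ne; rewrite /rk_lt -neq_ltn (inj_eq rk_inj). Qed.

Definition rankY x a : nat :=
  match x.1 a with
  | None => rank_in (ordY x) (starset x) a
  | Some true => #|starset x| + rank_in rk_lt (oneset x) a
  | Some false => #|starset x| + #|oneset x| + rank_in rk_lt (zeroset x) a
  end.

Section RankY.
Variable x : rawY A.
Hypothesis wf_x : wfY x.

Lemma rankY_blocks a :
  [/\ x.1 a = None -> rank_in (ordY x) (starset x) a < #|starset x|,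
      x.1 a = Some true -> rank_in rk_lt (oneset x) a < #|oneset x| &
      x.1 a = Some false -> rank_in rk_lt (zeroset x) a < #|zeroset x|].
Proof.
have [_ irr _ _] := wfYP _ wf_x.
by split=> Ea; apply: rank_in_lt; rewrite ?inE ?Ea //; apply: rk_lt_irr.
Qed.

Lemma rankY_lt a : rankY x a < #|A|.
Proof.
rewrite -(card_starset_oneset_zeroset x) /rankY.
have [hS hO hZ] := rankY_blocks a.
by case Ea: (x.1 a) => [[]|]; [move/hO: Ea | move/hZ: Ea | move/hS: Ea]; lia.
Qed.

Lemma coord_rankY a :
  x.1 a = if rankY x a < #|starset x| then None
          else Some (rankY x a < #|starset x| + #|oneset x|).
Proof.
rewrite /rankY; have [hS hO hZ] := rankY_blocks a.
case Ea: (x.1 a) => [[]|]; last by rewrite hS.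
- by move/hO: Ea => lt_a; rewrite ifN ?ltn_add2l ?lt_a //; lia.
- by move/hZ: Ea => lt_a; rewrite ifN; [congr Some | ]; lia.
Qed.

Lemma rankY_starset a : (rankY x a < #|starset x|) = (a \in starset x).
Proof. by rewrite inE coord_rankY; case: ifP. Qed.

Lemma rankY_inj : injective (rankY x).
Proof.
have [_ irr trans total] := wfYP _ wf_x.
move=> a b eq_ab; have: x.1 a = x.1 b by rewrite !coord_rankY eq_ab.
rewrite /rankY in eq_ab; case Ea: (x.1 a) eq_ab => [[]|] eq_ab Eb;
  rewrite -Eb in eq_ab.
1,2: apply: (rank_in_inj rk_lt_irr rk_lt_trans (@rk_lt_total _)) (addnI eq_ab);
  by rewrite inE ?Ea -?Eb.
by apply: (rank_in_inj irr trans total) eq_ab; rewrite inE ?Ea -?Eb.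
Qed.

Lemma ordY_rankY a b :
  ordY x a b = (rankY x a < rankY x b) && (rankY x b < #|starset x|).
Proof.
have [sub irr trans total] := wfYP _ wf_x.
have rankY_star d : d \in starset x -> rankY x d = rank_in (ordY x) (starset x) d.
  by rewrite inE /rankY => /eqP ->.
case ab: (ordY x a b).
  have /andP[aS bS] := sub _ _ ab.
  by rewrite rankY_starset bS andbT !rankY_star ?(rank_in_mono irr trans aS ab).
apply/esym/negbTE/negP => /andP[lt_ab lt_b].
have bS : b \in starset x by rewrite -rankY_starset.
have aS : a \in starset x by rewrite -rankY_starset (ltn_trans lt_ab).
have ne : a != b by apply: contraTneq lt_ab => ->; rewrite ltnn.
move: (total _ _ aS bS ne); rewrite ab => /(rank_in_mono irr trans bS).
by rewrite -!rankY_star // ltnNge ltnW.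
Qed.

Lemma rankY_perm : exists s, forall a, rk (s a) = rankY x a.
Proof.
pose f a := enum_val (Ordinal (rankY_lt a) : 'I_#|A|).
have inj_f : injective f by move=> a b /enum_val_inj/(congr1 val)/rankY_inj.
by exists (perm inj_f) => a; rewrite permE /rk /f enum_valK.
Qed.

End RankY.

Lemma starset_act x s : starset (actY x s) = s @^-1: starset x.
Proof. by apply/setP => a; rewrite !inE ffunE. Qed.

Lemma oneset_act x s : oneset (actY x s) = s @^-1: oneset x.
Proof. by apply/setP => a; rewrite !inE ffunE. Qed.

Lemma pA_act x s : pA (actY x s) = pA x.
Proof. by rewrite /pA starset_act oneset_act !card_preimset //; apply: perm_inj. Qed.

Lemma wfY_act x s : wfY x -> wfY (actY x s).
Proof.
case/wfYP=> sub irr trans total; apply/wfYP; rewrite starset_act; split.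
- by move=> a b; rewrite /ordY !ffunE => /sub; rewrite !inE.
- by move=> a; rewrite /ordY !ffunE; apply: irr.
- by move=> b a d; rewrite /ordY !ffunE; apply: trans.
- move=> a b aS bS; rewrite -(inj_eq (@perm_inj _ s)) /ordY !ffunE => ne.
  by apply: total; rewrite // inE; rewrite !inE in aS bS.
Qed.

Lemma Ylev_act k x s : x \in Ylev A k -> actY x s \in Ylev A k.
Proof.
rewrite !inE starset_act card_preimset; last exact: perm_inj.
by case/andP=> /(wfY_act s) -> ->.
Qed.

Lemma actY_mul x s t : actY (actY x s) t = actY x (t * s).
Proof.
congr pair; apply/ffunP => a; rewrite !ffunE ?permM //.
by apply/ffunP => b; rewrite !ffunE !permM.
Qed.

Lemma actY1 x : actY x 1 = x.
Proof.
case: x => c r; congr pair; apply/ffunP => a; rewrite !ffunE ?perm1 //.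
by apply/ffunP => b; rewrite !ffunE !perm1.
Qed.

Lemma orbitY_act x s : orbitY (actY x s) = orbitY x.
Proof.
apply/setP => y; apply/imsetP/imsetP => [[t _ ->] | [t _ ->]].
  by exists (t * s)%g; rewrite ?actY_mul.
by exists (t * s^-1)%g; rewrite // actY_mul -mulgA mulVg mulg1.
Qed.

Lemma orbitY_id x : x \in orbitY x.
Proof. by apply/imsetP; exists 1%g; rewrite ?actY1. Qed.

Lemma pick_orbitY x : exists s, [pick y in orbitY x] = Some (actY x s).
Proof.
case: pickP => [_ /imsetP[s _ ->] | no_y]; first by exists s.
by have := no_y x; rewrite orbitY_id.
Qed.

Lemma qpA_orbitY x : qpA (orbitY x) = pA x.
Proof. by rewrite /qpA; have [s ->] := pick_orbitY x; apply: pA_act. Qed.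

Definition stdY (k j : nat) : rawY A :=
  ([ffun a => if rk a < k then None else Some (rk a < k + j)],
   [ffun a => [ffun b => (rk a < rk b) && (rk b < k)]]).

Lemma actY_stdY x : wfY x -> exists s, x = actY (stdY #|starset x| #|oneset x|) s.
Proof.
move=> wf_x; have [s rk_s] := rankY_perm wf_x; exists s.
rewrite [LHS]surjective_pairing; congr pair.
  by apply/ffunP => a; rewrite !ffunE rk_s -coord_rankY.
by apply/ffunP => a; apply/ffunP => b; rewrite !ffunE !rk_s -ordY_rankY.
Qed.

Lemma orbitY_pA x y : wfY x -> wfY y -> pA x = pA y -> orbitY x = orbitY y.
Proof.
move=> wf_x wf_y [eq_k eq_j].
have [s ->] := actY_stdY wf_x; have [t ->] := actY_stdY wf_y.
by rewrite !orbitY_act eq_k eq_j.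
Qed.

Lemma ith_starset i x a : ith i x = Some a -> a \in starset x.
Proof. by rewrite /ith; case: pickP => // b /andP[bS _] [<-]. Qed.

Lemma ith_lt i x : wfY x -> i < #|starset x| -> exists a, ith i x = Some a.
Proof.
case/wfYP=> sub irr trans total lt_i.
rewrite /ith; case: pickP => [a _ | no_a]; first by exists a.
have [a aS rank_a] := rank_in_onto irr trans total lt_i.
suff below_a : [set b | x.2 b a] = [set b in starset x | ordY x b a].
  by have := no_a a; rewrite aS below_a -/(rank_in _ _ a) rank_a eqxx.
by apply/setP => b; rewrite inE [RHS]inE andb_idl // => /sub/andP[].
Qed.

Section Face.
Variables (x : rawY A) (i : nat) (e : bool) (a : A).
Hypothesis ith_a : ith i x = Some a.

Lemma starset_face : starset (faceY i e x) = starset x :\ a.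
Proof.
by apply/setP => b; rewrite /faceY ith_a !inE ffunE; case: (b =P a).
Qed.

Lemma oneset_face : oneset (faceY i e x) = if e then a |: oneset x else oneset x.
Proof.
have := ith_starset ith_a; rewrite inE => /eqP x_a.
by case: e; apply/setP => b; rewrite /faceY ith_a !inE ffunE;
  case: (b =P a) => [->|]; rewrite ?x_a.
Qed.

Lemma wfY_face : wfY x -> wfY (faceY i e x).
Proof.
case/wfYP=> sub irr trans total; apply/wfYP; rewrite starset_face; split.
- move=> b b'; rewrite /ordY /faceY ith_a !ffunE !inE => /and3P[/sub].
  by rewrite !inE => /andP[-> ->] -> ->.
- by move=> b; rewrite /ordY /faceY ith_a !ffunE [x.2 b b]irr.
- move=> b' b b''; rewrite /faceY ith_a /ordY !ffunE.
  by case/and3P=> bb' -> _ /and3P[b'b'' _ ->]; rewrite !andbT; exact: (trans b' b b'').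
- move=> b b'; rewrite !inE /ordY /faceY ith_a !ffunE => /andP[ba bS] /andP[b'a b'S] ne.
  by rewrite ba b'a !andbT; apply: total; rewrite ?inE.
Qed.

End Face.

Lemma card_starset_face x i e a :
  ith i x = Some a -> #|starset (faceY i e x)| = #|starset x|.-1.
Proof.
move=> ith_a; rewrite (starset_face _ ith_a) [#|starset x|](cardsD1 a).
by rewrite (ith_starset ith_a).
Qed.

Lemma Ylev_face k x i e :
  x \in Ylev A k -> i < k -> faceY i e x \in Ylev A k.-1.
Proof.
rewrite !inE => /andP[wf_x /eqP k_x]; rewrite -k_x => /(ith_lt wf_x)[a ith_a].
by rewrite (wfY_face _ ith_a) // (card_starset_face _ ith_a) eqxx.
Qed.

Lemma pA_face k x i e :
  x \in Ylev A k -> i < k -> pA (faceY i e x) = zface e (pA x).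
Proof.
rewrite !inE => /andP[wf_x /eqP k_x]; rewrite -k_x => /(ith_lt wf_x)[a ith_a].
rewrite /pA /zface (card_starset_face _ ith_a) (oneset_face _ ith_a).
have := ith_starset ith_a; rewrite inE => /eqP x_a.
by case: e; rewrite ?cardsU1 ?inE ?x_a ?addn0 ?addn1.
Qed.

Lemma Zt_pA k x : x \in Ylev A k -> Zt #|A| k (pA x).
Proof.
rewrite inE /Zt /pA => /andP[_ /eqP <-] /=.
by rewrite eqxx -(card_starset_oneset_zeroset x) leq_addr.
Qed.

Lemma card_rk_lt m : m <= #|A| -> #|[set a | rk a < m]| = m.
Proof.
move=> le_mA.
have -> : [set a | rk a < m] = [set enum_val (widen_ord le_mA i) | i : 'I_m].
  apply/setP => a; rewrite inE; apply/idP/imsetP => [lt_am | [i _ ->]].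
    by exists (Ordinal lt_am) => //; apply: rk_inj; rewrite /rk enum_valK.
  by rewrite /rk enum_valK /=.
by rewrite card_imset ?card_ord // => i i' /enum_val_inj/(congr1 val) /= /val_inj.
Qed.

Lemma starset_stdY k j : starset (stdY k j) = [set a | rk a < k].
Proof. by apply/setP => a; rewrite !inE ffunE; case: ifP. Qed.

Lemma stdY_Ylev k j : k <= #|A| -> stdY k j \in Ylev A k.
Proof.
move=> le_kA; rewrite inE starset_stdY card_rk_lt // eqxx andbT.
apply/wfYP; rewrite starset_stdY; split.
- move=> a b; rewrite /ordY !ffunE !inE => /andP[lt_ab lt_b].
  by rewrite lt_b (ltn_trans lt_ab).
- by move=> a; rewrite /ordY !ffunE ltnn.
- move=> b a d; rewrite /ordY !ffunE => /andP[lt_ab _] /andP[lt_bd ->].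
  by rewrite (ltn_trans lt_ab).
- move=> a b; rewrite !inE /ordY !ffunE => lt_a lt_b ne.
  by rewrite lt_a lt_b !andbT -neq_ltn (inj_eq rk_inj).
Qed.

Lemma pA_stdY k j : k + j <= #|A| -> pA (stdY k j) = (k, j).
Proof.
move=> le_kjA; have le_kA : k <= #|A| by apply: leq_trans le_kjA; apply: leq_addr.
have oneset_std : oneset (stdY k j) = [set a | rk a < k + j] :\: [set a | rk a < k].
  by apply/setP => a; rewrite !inE ffunE; case: ifP.
have /setIidPr sub_k : [set a | rk a < k] \subset [set a | rk a < k + j].
  by apply/subsetP => a; rewrite !inE; apply: ltn_addr.
by rewrite /pA starset_stdY oneset_std cardsD sub_k !card_rk_lt // addKn.
Qed.

Lemma orbits_qfaceY k O i e : O \in orbits A k -> i < k ->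
  qfaceY i e O \in orbits A k.-1 /\ qpA (qfaceY i e O) = zface e (qpA O).
Proof.
case/imsetP=> x x_k -> lt_i; rewrite /qfaceY; have [s ->] := pick_orbitY x.
have xs_k := Ylev_act s x_k.
split; first by apply: imset_f; apply: Ylev_face.
by rewrite !qpA_orbitY (pA_face _ xs_k lt_i) pA_act.
Qed.

Lemma qpA_inj k : {in orbits A k &, injective (@qpA A)}.
Proof.
move=> _ _ /imsetP[x x_k ->] /imsetP[y y_k ->]; rewrite !qpA_orbitY.
by apply: orbitY_pA; [move: x_k | move: y_k]; rewrite inE => /andP[].
Qed.

Lemma qpA_onto k j : k + j <= #|A| -> exists2 O, O \in orbits A k & qpA O = (k, j).
Proof.
move=> le_kjA; exists (orbitY (stdY k j)); last by rewrite qpA_orbitY pA_stdY.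
by apply/imset_f/stdY_Ylev; apply: leq_trans le_kjA; apply: leq_addr.
Qed.

End YA.

Theorem proposition2p16 (A : finType) (n : nat) (hA : #|A| = n) :
  (* p_A maps Y^A[k] into Z~_n[k] *)
  (forall k x, x \in Ylev A k -> Zt n k (pA x)) /\
  (* p_A is a square-map: it commutes with the face maps d^e_{i+1}, 0 <= i < k *)
  (forall k x i e, x \in Ylev A k -> i < k ->
     pA (faceY i e x) = zface e (pA x)) /\
  (* p_A is Sigma_A-invariant *)
  (forall k x (s : {perm A}), x \in Ylev A k -> pA (actY x s) = pA x) /\
  (* the induced map Y^A/Sigma_A -> Z~_n is a square-map ... *)
  (forall k O i e, O \in orbits A k -> i < k ->
     qfaceY i e O \in orbits A k.-1 /\ qpA (qfaceY i e O) = zface e (qpA O)) /\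
  (* ... which is bijective in every degree k: lands in Z~_n[k], *)
  (forall k O, O \in orbits A k -> Zt n k (qpA O)) /\
  (* is injective on (Y^A/Sigma_A)[k], *)
  (forall k, {in orbits A k &, injective (@qpA A)}) /\
  (* and is surjective onto Z~_n[k]. *)
  (forall k z, Zt n k z -> exists2 O, O \in orbits A k & qpA O = z).
Proof.
subst n; split; first exact: Zt_pA.
split; first exact: pA_face.
split; first by move=> k x s _; apply: pA_act.
split; first exact: orbits_qfaceY.
split; first by move=> k _ /imsetP[x x_k ->]; rewrite qpA_orbitY Zt_pA.
split; first exact: qpA_inj.
by move=> k [_ j] /andP[/eqP /= -> le_kjA]; apply: qpA_onto.
Qed.
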